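(* Let $M$ be a model of a complete affine theory $T$ and let $f:M\to M$ be a definable function. Then there exists a type $p(x)\in S_1(T)$ which is $f$-invariant, i.e. $p(\phi(x))=p(\phi(f(x)))$ for every affine formula $\phi(x)$. In particular, if $M$ is $\aleph_0$-saturated then there exists $c\in M$ with $tp(c)=tp(f(c))$.
   Context: Affine continuous logic: $L$-structures are complete metric spaces $(M,d)$ with $d\le1$ and Lipschitz interpretations of function symbols and $[0,1]$-valued relation symbols. Affine formulas are built from $1$ and atomic formulas (including $d$) using only $r\cdot\phi$ ($r\in\mathbb R$), $\phi+\psi$, $\inf_x$, $\sup_x$. $T$ is complete: for each sentence $\phi$ there is a unique $r$ with $T\models\phi=r$. A predicate $P:M^n\to\mathbb R$ is definable (without parameters) if it is a uniform limit of $\phi_k^M$ for affine formulas $\phi_k$; the same sequence defines it in all models of $T$. A function $f:M\to M$ is definable if $(x,y)\mapsto d(f(x),y)$ is a definable predicate; then for every formula $\phi(x)$, $x\mapsto\phi(f(x))$ is a definable predicate. A $1$-type of $T$ is a maximal set of conditions in one variable satisfiable with $T$, identified with a positive linear functional $\phi\mapsto p(\phi)$ on formulas with $p(1)=1$, extended to definable predicates by $p(P)=\lim_kp(\phi_k)$ when $\phi_k\to P$ uniformly. $S_1(T)$ is the set of $1$-types. $tp(c)$ is the type $\phi\mapsto\phi^M(c)$. $M$ is $\aleph_0$-saturated if every type over a finite subset of $M$ is realized in $M$. *)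

From mathcomp Require Import all_boot all_order all_algebra.
From mathcomp Require Import all_classical all_reals.
Set Implicit Arguments.
Unset Strict Implicit.
Unset Printing Implicit Defensive.
Import Order.TTheory GRing.Theory Num.Theory.
Local Open Scope ring_scope.
Local Open Scope classical_set_scope.

Record language := Language {
  funs : Type;
  fun_ar : funs -> nat;
  rels : Type;
  rel_ar : rels -> nat }.

Section AffineLogic.
Variable R : realType.
Variable L : language.

Definition tuple_dist (M : Type) (d : M -> M -> R) n (a b : 'I_n -> M) : R :=
  \big[Num.max/0]_(i < n) d (a i) (b i).

Record structure := Structure {
  carrier :> Type;
  point : carrier;                              (* nonempty *)
  dist : carrier -> carrier -> R;
  dist_ge0 : forall x y, 0 <= dist x y;
  dist_le1 : forall x y, dist x y <= 1;
  dist_xx : forall x, dist x x = 0;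
  dist_eq0 : forall x y, dist x y = 0 -> x = y;
  dist_sym : forall x y, dist x y = dist y x;
  dist_tri : forall x y z, dist x z <= dist x y + dist y z;
  dist_complete : forall u : nat -> carrier,
      (forall e : R, 0 < e -> exists N, forall m n, (N <= m)%N -> (N <= n)%N ->
          dist (u m) (u n) < e) ->
      exists l, forall e : R, 0 < e -> exists N, forall n, (N <= n)%N ->
          dist (u n) l < e;
  fun_int : forall f : funs L, ('I_(fun_ar f) -> carrier) -> carrier;
  rel_int : forall P : rels L, ('I_(rel_ar P) -> carrier) -> R;
  fun_lip : forall f : funs L, exists K : R, forall a b,
      dist (@fun_int f a) (@fun_int f b) <= K * tuple_dist dist a b;
  rel_range : forall (P : rels L) a, 0 <= @rel_int P a <= 1;
  rel_lip : forall P : rels L, exists K : R, forall a b,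
      `|@rel_int P a - @rel_int P b| <= K * tuple_dist dist a b }.

Arguments fun_int {s} f _.
Arguments rel_int {s} P _.

Inductive aterm :=
  | Tvar : nat -> aterm
  | Tapp : forall f : funs L, ('I_(fun_ar f) -> aterm) -> aterm.

Inductive aformula :=
  | Fone : aformula
  | Fdist : aterm -> aterm -> aformula
  | Frel : forall P : rels L, ('I_(rel_ar P) -> aterm) -> aformula
  | Fscale : R -> aformula -> aformula
  | Fadd : aformula -> aformula -> aformula
  | Finf : aformula -> aformula          (* inf over variable 0 *)
  | Fsup : aformula -> aformula.         (* sup over variable 0 *)

Fixpoint tfv (n : nat) (t : aterm) : Prop :=
  match t with
  | Tvar k => (k < n)%N
  | Tapp f args => forall i, tfv n (args i)
  end.

Fixpoint ffv (n : nat) (phi : aformula) : Prop :=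
  match phi with
  | Fone => True
  | Fdist t s => tfv n t /\ tfv n s
  | Frel P args => forall i, tfv n (args i)
  | Fscale _ psi => ffv n psi
  | Fadd psi chi => ffv n psi /\ ffv n chi
  | Finf psi => ffv n.+1 psi
  | Fsup psi => ffv n.+1 psi
  end.

Definition scons (M : Type) (x : M) (env : nat -> M) : nat -> M :=
  fun k => if k is k'.+1 then env k' else x.

Fixpoint teval (M : structure) (env : nat -> M) (t : aterm) : M :=
  match t with
  | Tvar k => env k
  | Tapp f args => fun_int f (fun i => teval env (args i))
  end.

Fixpoint feval (M : structure) (env : nat -> M) (phi : aformula) : R :=
  match phi with
  | Fone => 1
  | Fdist t s => dist (teval env t) (teval env s)
  | Frel P args => rel_int P (fun i => teval env (args i))
  | Fscale r psi => r * feval env psi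
  | Fadd psi chi => feval env psi + feval env chi
  | Finf psi => inf [set feval (scons x env) psi | x in [set: M]]
  | Fsup psi => sup [set feval (scons x env) psi | x in [set: M]]
  end.

(* environment  x, a_0, ..., a_(n-1)  (variable 0 = x, variable i+1 = a_i) *)
Definition penv (M : structure) (x : M) (a : seq M) : nat -> M :=
  scons x (fun k => nth x a k).

Definition eval1 (M : structure) (x : M) (phi : aformula) : R := feval (penv x [::]) phi.

Definition eval2 (M : structure) (x y : M) (phi : aformula) : R := feval (penv x [:: y]) phi.

(* A 1-type over the finite parameter tuple a (in M), i.e. of the complete theory
   Th_aff(M, a): a positive linear functional with p(1) = 1 on the affine formulas
   phi(x, a) (free variables among x = var 0 and the parameters var 1..|a|).
   Positivity is w.r.t. the theory: if Th(M,a) |= phi >= 0, i.e. phi(b,a) >= 0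
   for all b in M, then p(phi) >= 0.  *)
Definition is_type_over (M : structure) (a : seq M) (p : aformula -> R) : Prop :=
  let n := (size a).+1 in
  [/\ p Fone = 1,
      (forall r phi, ffv n phi -> p (Fscale r phi) = r * p phi),
      (forall phi psi, ffv n phi -> ffv n psi -> p (Fadd phi psi) = p phi + p psi)
    & (forall phi, ffv n phi -> (forall b : M, 0 <= feval (penv b a) phi) -> 0 <= p phi)].

(* S_1(T) for T the complete theory of M (any complete T with M |= T has the
   same consequences, hence the same type space). *)
Definition is_type (M : structure) (p : aformula -> R) : Prop := @is_type_over M [::] p.

Definition realizes_over (M : structure) (a : seq M) (c : M) (p : aformula -> R) : Prop :=
  forall phi, ffv (size a).+1 phi -> p phi = feval (penv c a) phi.

Definition aleph0_saturated (M : structure) : Prop :=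
  forall (a : seq M) (p : aformula -> R), is_type_over a p ->
    exists c : M, realizes_over a c p.

Definition same_type (M : structure) (c d : M) : Prop :=
  forall phi, ffv 1 phi -> eval1 c phi = eval1 d phi.

Definition unif_conv1 (M : structure) (g : nat -> M -> R) (P : M -> R) : Prop :=
  forall e : R, 0 < e -> exists N, forall k, (N <= k)%N -> forall x, `|g k x - P x| <= e.

Definition unif_conv2 (M : structure) (g : nat -> M -> M -> R) (P : M -> M -> R) : Prop :=
  forall e : R, 0 < e -> exists N, forall k, (N <= k)%N -> forall x y,
    `|g k x y - P x y| <= e.

Definition definable_pred1 (M : structure) (P : M -> R) : Prop :=
  exists phis : nat -> aformula, (forall k, ffv 1 (phis k)) /\
    unif_conv1 (fun k x => eval1 x (phis k)) P.

Definition definable_fun (M : structure) (f : M -> M) : Prop :=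
  exists phis : nat -> aformula, (forall k, ffv 2 (phis k)) /\
    unif_conv2 (fun k x y => eval2 x y (phis k)) (fun x y => dist (f x) y).

(* p(P) = v for a definable predicate P: p(phi_k) -> v along some sequence of
   formulas phi_k converging uniformly to P (well defined by positivity). *)
Definition type_pred_value (M : structure) (p : aformula -> R) (P : M -> R) (v : R) : Prop :=
  exists phis : nat -> aformula, (forall k, ffv 1 (phis k)) /\
    unif_conv1 (fun k x => eval1 x (phis k)) P /\
    (forall e : R, 0 < e -> exists N, forall k, (N <= k)%N -> `|p (phis k) - v| <= e).

Definition f_invariant (M : structure) (f : M -> M) (p : aformula -> R) : Prop :=
  forall phi, ffv 1 phi -> type_pred_value p (fun x => eval1 (f x) phi) (p phi).

End AffineLogic.

From Pilot Require Import Defs.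
From mathcomp Require Import all_boot all_order all_algebra.
From mathcomp Require Import all_classical all_reals.
From mathcomp Require Import topology normedtype sequences lra.
Import Order.TTheory GRing.Theory Num.Theory numFieldNormedType.Exports.
Local Open Scope ring_scope.
Local Open Scope classical_set_scope.
Set Implicit Arguments.
Unset Strict Implicit.

(* Fix a point [a] of [M] and an ultrafilter [G] on [nat] refining the
   cofinite filter.  For bounded [g : M -> R], the [G]-limit of the Cesaro
   means of [g] along the orbit [a, f a, f^2 a, ...] is a positive normalised
   linear functional, and it does not change when [g] is replaced by [g \o f],
   because the two means differ by [(g (f^(n+1) a) - g a) / (n + 1)].
   Evaluated at the formulas it is therefore a type [p], and [p] is
   [f]-invariant: [phi (f x)] is the uniform limit of the formulas
   [inf_z (phi z + C chi_k (x, z))] with [C] a Lipschitz constant of [phi]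
   and [chi_k (x, y)] tending to [dist (f x) y].  In an aleph_0-saturated
   model a realisation [c] of [p] satisfies [tp c = tp (f c)]. *)

Section ArithmeticMean.
Variable R : archiRealFieldType.
Implicit Types (u v : nat -> R) (n : nat).

Lemma arithmetic_meanE u n :
  arithmetic_mean u n = n.+1%:R^-1 * \sum_(i < n.+1) u i.
Proof. by rewrite /arithmetic_mean /= seriesEnat /= big_mkord. Qed.

Lemma arithmetic_mean_cst (c : R) n : arithmetic_mean (fun=> c) n = c.
Proof.
by rewrite arithmetic_meanE sumr_const card_ord -(mulr_natl c) mulKf ?pnatr_eq0.
Qed.

Lemma arithmetic_meanD u v n :
  arithmetic_mean (fun i => u i + v i) n = arithmetic_mean u n + arithmetic_mean v n.
Proof. by rewrite !arithmetic_meanE big_split mulrDr. Qed.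

Lemma arithmetic_meanB u v n :
  arithmetic_mean (fun i => u i - v i) n = arithmetic_mean u n - arithmetic_mean v n.
Proof. by rewrite !arithmetic_meanE sumrB mulrBr. Qed.

Lemma arithmetic_meanZ (r : R) u n :
  arithmetic_mean (fun i => r * u i) n = r * arithmetic_mean u n.
Proof. by rewrite !arithmetic_meanE -mulr_sumr mulrCA. Qed.

Lemma arithmetic_mean_ge0 u n : (forall i, 0 <= u i) -> 0 <= arithmetic_mean u n.
Proof. by move=> u_ge0; rewrite arithmetic_meanE mulr_ge0 ?invr_ge0 ?sumr_ge0. Qed.

Lemma arithmetic_mean_norm_le u (B : R) n :
  (forall i, `|u i| <= B) -> `|arithmetic_mean u n| <= B.
Proof.
move=> uB; rewrite arithmetic_meanE normrM ger0_norm ?invr_ge0 // ler_pdivrMl ?ltr0n //.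
apply: le_trans (ler_norm_sum _ _ _) _.
rewrite (le_trans (ler_sum _ (fun (i : 'I_n.+1) _ => uB i))) //.
by rewrite sumr_const card_ord mulr_natl.
Qed.

Lemma arithmetic_mean_shiftS u n :
  arithmetic_mean (fun i => u i.+1) n - arithmetic_mean u n =
  harmonic n * (u n.+1 - u 0%N).
Proof.
rewrite !arithmetic_meanE -mulrBr -sumrB /=.
by rewrite -(big_mkord xpredT (fun i => u i.+1 - u i)) telescope_sumr.
Qed.

Lemma cvg_arithmetic_mean_shiftS u (B : R) : (forall i, `|u i| <= B) ->
  (fun n => arithmetic_mean (fun i => u i.+1) n - arithmetic_mean u n) @ \oo --> 0.
Proof.
move=> uB; apply: norm_cvg0.
apply: (@squeeze_cvgr _ \oo _ R (fun=> 0) (fun n => harmonic n * (B + B))).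
- apply: nearW => n; rewrite normr_ge0 arithmetic_mean_shiftS normrM /=.
  rewrite ger0_norm ?invr_ge0 // ler_wpM2l ?invr_ge0 //.
  by rewrite (le_trans (ler_normB _ _)) ?lerD.
- exact: (@cvg_cst R).
- by rewrite -(mul0r (B + B)); exact: cvgM cvg_harmonic (cvg_cst _).
Qed.
End ArithmeticMean.

Lemma ultra_fmap (T U : Type) (g : T -> U) (F : set_system T) :
  UltraFilter F -> UltraFilter (g @ F).
Proof.
move=> FU; split; first exact: fmap_proper_filter.
move=> H HF gFH; rewrite predeqE => A; split; last exact: gFH.
move=> HA; have [//|FnA] := in_ultra_setVsetC (g @^-1` A) FU.
have HnA : H (~` A) by apply: gFH; rewrite /fmap /= preimage_setC.
by have /filter_ex [? []] : H (A `&` ~` A) by exact: filterI.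
Qed.

Lemma ultra_bounded_cvg (R : realType) (T : Type) (F : set_system T)
    (u : T -> R) (B : R) :
  UltraFilter F -> (forall t, `|u t| <= B) -> cvg (u @ F).
Proof.
move=> FU uB; have := @segment_compact R (- B) B.
rewrite compact_ultra => /(_ _ (ultra_fmap u FU)) [].
  by rewrite /fmap /=; apply: filterE => t; rewrite /= in_itv /= -ler_norml.
by move=> l [_ ul]; exact: cvgP ul.
Qed.

Section InvariantMean.
Variables (R : realType) (T : Type) (f : T -> T) (a : T) (G : set_system nat).
Context {GU : UltraFilter G}.
Hypothesis G_cofinite : \oo `<=` G.

Definition fun_bounded (g : T -> R) := exists B : R, forall x, `|g x| <= B.

Definition orbit_mean (g : T -> R) := arithmetic_mean (fun i => g (iter i f a)).

Definition invariant_mean (g : T -> R) := lim (orbit_mean g @ G).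

Lemma orbit_mean_cvg g : fun_bounded g -> orbit_mean g @ G --> invariant_mean g.
Proof.
move=> [B gB]; apply: (@ultra_bounded_cvg _ _ _ _ B GU) => n.
exact: arithmetic_mean_norm_le.
Qed.

Lemma orbit_meanD g h :
  orbit_mean (fun x => g x + h x) = fun n => orbit_mean g n + orbit_mean h n.
Proof. by apply/funext => n; exact: arithmetic_meanD. Qed.

Lemma orbit_meanZ r g : orbit_mean (fun x => r * g x) = fun n => r * orbit_mean g n.
Proof. by apply/funext => n; exact: arithmetic_meanZ. Qed.

Lemma invariant_mean_cst c : invariant_mean (fun=> c) = c.
Proof.
rewrite /invariant_mean (_ : orbit_mean _ = fun=> c); first exact: lim_cst.
by apply/funext => n; exact: arithmetic_mean_cst.
Qed.

Lemma invariant_meanD g h : fun_bounded g -> fun_bounded h ->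
  invariant_mean (fun x => g x + h x) = invariant_mean g + invariant_mean h.
Proof.
move=> /orbit_mean_cvg gcv /orbit_mean_cvg hcv; apply: norm_cvg_lim.
by rewrite orbit_meanD; exact: cvgD.
Qed.

Lemma invariant_meanZ r g : fun_bounded g ->
  invariant_mean (fun x => r * g x) = r * invariant_mean g.
Proof.
move=> /orbit_mean_cvg gcv; apply: norm_cvg_lim.
by rewrite orbit_meanZ; exact: cvgM (cvg_cst r) gcv.
Qed.

Lemma invariant_mean_ge0 g : fun_bounded g -> (forall x, 0 <= g x) ->
  0 <= invariant_mean g.
Proof.
move=> /orbit_mean_cvg gcv g_ge0; apply: (cvgr_to_ge gcv); apply: nearW => n.
exact: arithmetic_mean_ge0.
Qed.

Lemma invariant_mean_dist_le g h (e : R) : fun_bounded g -> fun_bounded h ->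
  (forall x, `|g x - h x| <= e) -> `|invariant_mean g - invariant_mean h| <= e.
Proof.
move=> /orbit_mean_cvg gcv /orbit_mean_cvg hcv ghe.
apply: (cvgr_to_le (cvg_norm (cvgB gcv hcv))); apply: nearW => n /=.
have := arithmetic_mean_norm_le n (fun i => ghe (iter i f a)).
by rewrite arithmetic_meanB.
Qed.

Lemma invariant_mean_comp g : fun_bounded g ->
  invariant_mean (fun x => g (f x)) = invariant_mean g.
Proof.
move=> [B gB]; apply: norm_cvg_lim.
have mean_shift_cvg0 :
    (fun n => orbit_mean (fun x => g (f x)) n - orbit_mean g n) @ G --> 0.
  apply: cvg_trans (cvg_arithmetic_mean_shiftS (fun i => gB (iter i f a))).
  by move=> A /G_cofinite.
rewrite -[invariant_mean g]add0r -[orbit_mean _](@subrK _ (orbit_mean g)).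
exact: cvgD mean_shift_cvg0 (orbit_mean_cvg (ex_intro _ B gB)).
Qed.
End InvariantMean.

Section ImageSupInf.
Variables (R : realType) (T : Type) (t0 : T).
Implicit Types (g h : T -> R) (B e : R).

Lemma sup_image_norm_le g B : (forall t, `|g t| <= B) ->
  `|sup [set g t | t in [set: T]]| <= B.
Proof.
move=> gB; have ub : has_ubound [set g t | t in [set: T]].
  by exists B => _ [t _ <-]; exact: le_trans (ler_norm _) (gB t).
rewrite ler_norml; apply/andP; split.
  apply: le_trans (ub_le_sup ub (ex_intro2 _ _ t0 I erefl)).
  by rewrite lerNl (le_trans _ (gB t0)) // -normrN ler_norm.
apply: ge_sup; first by exists (g t0), t0.
by move=> _ [t _ <-]; exact: le_trans (ler_norm _) (gB t).
Qed.

Lemma sup_image_dist_le g h B e :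
  (forall t, `|g t| <= B) -> (forall t, `|h t| <= B) -> (forall t, `|g t - h t| <= e) ->
  `|sup [set g t | t in [set: T]] - sup [set h t | t in [set: T]]| <= e.
Proof.
have shift g' h' : (forall t, `|h' t| <= B) -> (forall t, `|g' t - h' t| <= e) ->
    sup [set g' t | t in [set: T]] <= sup [set h' t | t in [set: T]] + e.
  move=> h'B gh'; have ub : has_ubound [set h' t | t in [set: T]].
    by exists B => _ [t _ <-]; exact: le_trans (ler_norm _) (h'B t).
  apply: ge_sup; first by exists (g' t0), t0.
  move=> _ [t _ <-]; have := ub_le_sup ub (ex_intro2 _ _ t I erefl).
  by have := gh' t; rewrite ler_norml => /andP[_]; lra.
move=> gB hB ghe; rewrite ler_norml.
have hge t : `|h t - g t| <= e by rewrite distrC.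
by have := shift _ _ hB ghe; have := shift _ _ gB hge; lra.
Qed.

Lemma inf_imageE g :
  inf [set g t | t in [set: T]] = - sup [set - g t | t in [set: T]].
Proof. by rewrite /inf image_comp. Qed.

Lemma inf_image_norm_le g B : (forall t, `|g t| <= B) ->
  `|inf [set g t | t in [set: T]]| <= B.
Proof.
by move=> gB; rewrite inf_imageE normrN sup_image_norm_le // => t; rewrite normrN.
Qed.

Lemma inf_image_dist_le g h B e :
  (forall t, `|g t| <= B) -> (forall t, `|h t| <= B) -> (forall t, `|g t - h t| <= e) ->
  `|inf [set g t | t in [set: T]] - inf [set h t | t in [set: T]]| <= e.
Proof.
move=> gB hB ghe; rewrite !inf_imageE opprK addrC.
apply: (@sup_image_dist_le (fun t => - h t) (fun t => - g t) B) => t /=.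
- by rewrite normrN.
- by rewrite normrN.
by rewrite opprK addrC.
Qed.
End ImageSupInf.

Section Semantics.
Variables (R : realType) (L : language) (M : structure R L).

Definition env_dist_le n (e1 e2 : nat -> M) (d : R) :=
  forall k, (k < n)%N -> dist (e1 k) (e2 k) <= d.

Definition term_lipschitz n (t : aterm L) := exists C : R, 0 <= C /\
  forall e1 e2 d, 0 <= d -> env_dist_le n e1 e2 d ->
    dist (teval e1 t) (teval e2 t) <= C * d.

Definition formula_lipschitz n (phi : aformula R L) := exists C : R, 0 <= C /\
  forall e1 e2 d, 0 <= d -> env_dist_le n e1 e2 d ->
    `|feval e1 phi - feval e2 phi| <= C * d.

Lemma env_dist_le_scons n x (e1 e2 : nat -> M) d : 0 <= d ->
  env_dist_le n e1 e2 d -> env_dist_le n.+1 (scons x e1) (scons x e2) d.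
Proof. by move=> d_ge0 e12 [|k] /=; [rewrite dist_xx | rewrite ltnS; exact: e12]. Qed.

Lemma dist_diff_le (a b a' b' : M) :
  `|dist a b - dist a' b'| <= dist a a' + dist b b'.
Proof.
have := dist_tri a a' b; have := dist_tri a' b' b; have := dist_tri a' a b'.
have := dist_tri a b b'; rewrite (dist_sym b' b) (dist_sym a' a) ler_norml.
by move=> *; apply/andP; split; lra.
Qed.

Lemma tuple_dist_ge0 k (a b : 'I_k -> M) : 0 <= tuple_dist (@dist _ _ M) a b.
Proof.
apply: (big_ind (fun v => 0 <= v)) => // [x y x_ge0 _|i _]; last exact: dist_ge0.
by rewrite le_max x_ge0.
Qed.

Lemma tuple_dist_le k (a b : 'I_k -> M) (c : R) : 0 <= c ->
  (forall i, dist (a i) (b i) <= c) -> tuple_dist (@dist _ _ M) a b <= c.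
Proof.
move=> c_ge0 abc; apply: (big_ind (fun v => v <= c)) => // x y xc yc.
by rewrite ge_max xc.
Qed.

Lemma lipschitz_app (X : Type) (D : X -> X -> R) k (h : ('I_k -> M) -> X)
    (args : 'I_k -> aterm L) n (K : R) :
  (forall a b, D (h a) (h b) <= K * tuple_dist (@dist _ _ M) a b) ->
  (forall i, term_lipschitz n (args i)) ->
  exists C : R, 0 <= C /\ forall e1 e2 d, 0 <= d -> env_dist_le n e1 e2 d ->
    D (h (fun i => teval e1 (args i))) (h (fun i => teval e2 (args i))) <= C * d.
Proof.
move=> hK /fin_all_exists [C argsC].
have C_ge0 i : 0 <= C i by case: (argsC i).
have S_ge0 : 0 <= \sum_i C i by exact: sumr_ge0.
exists (Num.max K 0 * \sum_i C i); split; first by rewrite mulr_ge0 ?le_max ?lexx ?orbT.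
move=> e1 e2 d d_ge0 e12; apply: le_trans (hK _ _) _.
have td_le : tuple_dist (@dist _ _ M)
    (fun i => teval e1 (args i)) (fun i => teval e2 (args i)) <= (\sum_i C i) * d.
  apply: tuple_dist_le => [|i]; first exact: mulr_ge0.
  apply: le_trans ((argsC i).2 _ _ _ d_ge0 e12) _; rewrite ler_wpM2r //.
  by rewrite (bigD1 i) //= lerDl sumr_ge0.
have K_le : K <= Num.max K 0 by rewrite le_max lexx.
rewrite -mulrA (le_trans (ler_wpM2r (tuple_dist_ge0 _ _) K_le)) //.
by rewrite ler_wpM2l // le_max lexx orbT.
Qed.

Lemma teval_lipschitz n (t : aterm L) : tfv n t -> term_lipschitz n t.
Proof.
elim: t => [k | g args IH] /= t_fv.
  by exists 1; split => // e1 e2 d _ e12; rewrite mul1r; exact: e12.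
have [K gK] := fun_lip M g.
exact: (lipschitz_app (D := @dist _ _ M) gK (fun i => IH i (t_fv i))).
Qed.

Lemma feval_bounded (phi : aformula R L) :
  exists B : R, forall env : nat -> M, `|feval env phi| <= B.
Proof.
elim: phi => [|t s|P args|r psi [B psiB]|psi [B1 psiB] chi [B2 chiB]|psi [B psiB]
  |psi [B psiB]].
- by exists 1 => env; rewrite normr1.
- by exists 1 => env; rewrite ger0_norm ?dist_ge0 ?dist_le1.
- exists 1 => env /=.
  by have /andP[P_ge0 P_le1] := rel_range (fun i => teval env (args i)); rewrite ger0_norm.
- by exists (`|r| * B) => env; rewrite normrM ler_wpM2l.
- by exists (B1 + B2) => env; rewrite (le_trans (ler_normD _ _)) ?lerD.
- by exists B => env; apply: (inf_image_norm_le (Defs.point M)) => x; exact: psiB.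
- by exists B => env; apply: (sup_image_norm_le (Defs.point M)) => x; exact: psiB.
Qed.

Lemma feval_lipschitz n (phi : aformula R L) : ffv n phi -> formula_lipschitz n phi.
Proof.
elim: phi n => [|t s|P args|r psi IH|psi IH1 chi IH2|psi IH|psi IH] n /= phi_fv.
- by exists 0; split => // *; rewrite subrr normr0 mul0r.
- case: phi_fv => /teval_lipschitz [C1 [C1_ge0 tC1]].
  move=> /teval_lipschitz [C2 [C2_ge0 sC2]].
  exists (C1 + C2); split => [|e1 e2 d d_ge0 e12]; first exact: addr_ge0.
  by rewrite (le_trans (dist_diff_le _ _ _ _)) // mulrDl lerD ?tC1 ?sC2.
- have [K PK] := rel_lip M P.
  exact: (lipschitz_app (D := fun x y : R => `|x - y|) PK
    (fun i => teval_lipschitz (phi_fv i))).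
- have [C [C_ge0 psiC]] := IH n phi_fv.
  exists (`|r| * C); split => [|e1 e2 d d_ge0 e12]; first exact: mulr_ge0.
  by rewrite -mulrBr normrM -mulrA ler_wpM2l ?psiC.
- case: phi_fv => /IH1 [C1 [C1_ge0 psiC1]] /IH2 [C2 [C2_ge0 chiC2]].
  exists (C1 + C2); split => [|e1 e2 d d_ge0 e12]; first exact: addr_ge0.
  rewrite opprD addrACA (le_trans (ler_normD _ _)) // mulrDl.
  by rewrite lerD ?psiC1 ?chiC2.
- have [C [C_ge0 psiC]] := IH n.+1 phi_fv; have [B psiB] := feval_bounded psi.
  exists C; split => // e1 e2 d d_ge0 e12.
  apply: (inf_image_dist_le (Defs.point M) (B := B)) => [x|x|x]; rewrite ?psiB //.
  exact/psiC/env_dist_le_scons.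
- have [C [C_ge0 psiC]] := IH n.+1 phi_fv; have [B psiB] := feval_bounded psi.
  exists C; split => // e1 e2 d d_ge0 e12.
  apply: (sup_image_dist_le (Defs.point M) (B := B)) => [x|x|x]; rewrite ?psiB //.
  exact/psiC/env_dist_le_scons.
Qed.

Lemma feval_eq_env n (phi : aformula R L) (e1 e2 : nat -> M) : ffv n phi ->
  (forall k, (k < n)%N -> e1 k = e2 k) -> feval e1 phi = feval e2 phi.
Proof.
move=> /feval_lipschitz [C [_ phiC]] e12; apply/eqP; rewrite -subr_eq0 -normr_eq0.
rewrite eq_le normr_ge0 andbT -(mulr0 C) phiC // => k /e12 ->.
by rewrite dist_xx.
Qed.
End Semantics.

Section Renaming.
Variables (R : realType) (L : language).

Fixpoint trename (s : nat -> nat) (t : aterm L) : aterm L :=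
  match t with
  | Tvar k => Tvar L (s k)
  | Tapp g args => @Tapp L g (fun i => trename s (args i))
  end.

Definition uprename (s : nat -> nat) (k : nat) : nat :=
  if k is k'.+1 then (s k').+1 else 0%N.

Fixpoint frename (s : nat -> nat) (phi : aformula R L) : aformula R L :=
  match phi with
  | Fone => Fone R L
  | Fdist t u => Fdist R (trename s t) (trename s u)
  | Frel P args => @Frel R L P (fun i => trename s (args i))
  | Fscale r psi => Fscale r (frename s psi)
  | Fadd psi chi => Fadd (frename s psi) (frename s chi)
  | Finf psi => Finf (frename (uprename s) psi)
  | Fsup psi => Fsup (frename (uprename s) psi)
  end.

Lemma teval_rename (M : structure R L) (env : nat -> M) s t :
  teval env (trename s t) = teval (env \o s) t.
Proof.
by elim: t => [k|g args IH] //=; congr fun_int; apply/funext => i; exact: IH.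
Qed.

Lemma feval_rename (M : structure R L) phi s (env : nat -> M) :
  feval env (frename s phi) = feval (env \o s) phi.
Proof.
elim: phi s env => [|t u|P args|r psi IH|psi IH1 chi IH2|psi IH|psi IH] s env /=.
- by [].
- by rewrite !teval_rename.
- by congr rel_int; apply/funext => i; rewrite teval_rename.
- by rewrite IH.
- by rewrite IH1 IH2.
- congr inf; congr image; apply/funext => x; rewrite IH.
  by congr feval; apply/funext => -[|k].
- congr sup; congr image; apply/funext => x; rewrite IH.
  by congr feval; apply/funext => -[|k].
Qed.

Lemma tfv_rename n m s (t : aterm L) : (forall k, (k < n)%N -> (s k < m)%N) ->
  tfv n t -> tfv m (trename s t).
Proof. by move=> sP; elim: t => [k|g args IH] /=; [exact: sP | move=> ? i; exact: IH]. Qed.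

Lemma ffv_rename n m s (phi : aformula R L) : (forall k, (k < n)%N -> (s k < m)%N) ->
  ffv n phi -> ffv m (frename s phi).
Proof.
elim: phi n m s => [|t u|P args|r psi IH|psi IH1 chi IH2|psi IH|psi IH] n m s sP //=.
- by case=> ? ?; split; exact: tfv_rename sP _.
- by move=> argsP i; exact: tfv_rename sP _.
- exact: IH.
- by case=> ? ?; split; [exact: IH1 sP _ | exact: IH2 sP _].
- by apply: IH => -[|k] //; rewrite !ltnS; exact: sP.
- by apply: IH => -[|k] //; rewrite !ltnS; exact: sP.
Qed.

Lemma tfv_mono n m (t : aterm L) : (n <= m)%N -> tfv n t -> tfv m t.
Proof.
by move=> nm; elim: t => [k|g args IH] /=; [move/leq_trans; apply | move=> ? i; exact: IH].
Qed.

Lemma ffv_mono n m (phi : aformula R L) : (n <= m)%N -> ffv n phi -> ffv m phi.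
Proof.
elim: phi n m => [|t u|P args|r psi IH|psi IH1 chi IH2|psi IH|psi IH] n m nm //=.
- by case=> ? ?; split; exact: tfv_mono nm _.
- by move=> argsP i; exact: tfv_mono nm _.
- exact: IH.
- by case=> ? ?; split; [exact: IH1 nm _ | exact: IH2 nm _].
- exact: IH.
- exact: IH.
Qed.
End Renaming.

Section DefinableComposition.
Variables (R : realType) (L : language) (M : structure R L).

Lemma lipschitz_inf_dist (g : M -> R) (C : R) (y : M) :
  (forall x z, `|g x - g z| <= C * dist x z) ->
  g y = inf [set g z + C * dist y z | z in [set: M]].
Proof.
move=> gC; have lb z : g y <= g z + C * dist y z.
  by have := gC y z; rewrite ler_norml => /andP[_]; lra.
apply/le_anti/andP; split.
  by apply: lb_le_inf => [|_ [z _ <-] //]; exists (g y + C * dist y y), y.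
have lbd : has_lbound [set g z + C * dist y z | z in [set: M]].
  by exists (g y) => _ [z _ <-].
by have := ge_inf lbd (ex_intro2 _ _ y I erefl); rewrite dist_xx mulr0 addr0.
Qed.

Lemma eval1_lipschitz (phi : aformula R L) : ffv 1 phi ->
  exists C : R, 0 <= C /\ forall x z : M, `|eval1 x phi - eval1 z phi| <= C * dist x z.
Proof.
move=> /(feval_lipschitz M) [C [C_ge0 phiC]]; exists C; split => // x z.
by apply: phiC; [exact: dist_ge0 | case].
Qed.

Definition swap01 (k : nat) : nat := if k is 0 then 1 else if k is 1 then 0 else k.

Lemma definable_pred1_comp (f : M -> M) (phi : aformula R L) :
  definable_fun f -> ffv 1 phi -> definable_pred1 (fun x => eval1 (f x) phi).
Proof.
move=> [chi [chi_fv chi_cvg]] phi_fv; have [C [C_ge0 phiC]] := eval1_lipschitz phi_fv.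
pose psi k := Finf (Fadd phi (Fscale C (frename swap01 (chi k)))).
have psiE k x :
    eval1 x (psi k) = inf [set eval1 z phi + C * eval2 x z (chi k) | z in [set: M]].
  rewrite /eval1 /=; congr inf; congr image; apply/funext => z.
  rewrite feval_rename; congr (_ + _ * _).
    by apply: (feval_eq_env phi_fv) => -[|k'].
  by apply: (feval_eq_env (chi_fv k)) => -[|[|k']].
exists psi; split => [k|e e_gt0].
  split; first exact: ffv_mono phi_fv.
  by apply: ffv_rename (chi_fv k) => -[|[|k']].
have [N chiN] := chi_cvg (e / (C + 1)) ltac:(by rewrite divr_gt0 //; lra).
exists N => k kN x; rewrite psiE (lipschitz_inf_dist (f x) phiC).
have [B phiB] := feval_bounded M phi; have [Bk chiB] := feval_bounded M (chi k).
apply: le_trans (inf_image_dist_le (Defs.point M) (B := B + C * Num.max Bk 1)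
  (e := C * (e / (C + 1))) _ _ _) _.
- move=> z; rewrite (le_trans (ler_normD _ _)) // lerD ?phiB // normrM ger0_norm //.
  by rewrite ler_wpM2l // (le_trans (chiB _)) // le_max lexx.
- move=> z; rewrite (le_trans (ler_normD _ _)) // lerD ?phiB // normrM ger0_norm //.
  rewrite ler_wpM2l // ger0_norm ?dist_ge0 // (le_trans (dist_le1 _ _)) //.
  by rewrite le_max lexx orbT.
- move=> z; rewrite opprD addrACA subrr add0r -mulrBr normrM ger0_norm //.
  by rewrite ler_wpM2l ?chiN.
- rewrite mulrA ler_pdivrMr; last by lra.
  by rewrite mulrDr mulr1 mulrC lerDl ltW.
Qed.
End DefinableComposition.

Section MeanType.
Variables (R : realType) (L : language) (M : structure R L) (f : M -> M).
Variable G : set_system nat.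
Context {GU : UltraFilter G}.
Hypothesis G_cofinite : \oo `<=` G.

Definition mean_type (phi : aformula R L) : R :=
  invariant_mean f (Defs.point M) G (fun x => eval1 x phi).

Lemma eval1_bounded (phi : aformula R L) : fun_bounded (fun x : M => eval1 x phi).
Proof. by have [B phiB] := feval_bounded M phi; exists B => x; exact: phiB. Qed.

Lemma mean_type_is_type : is_type M mean_type.
Proof.
split => [|r phi _|phi psi _ _|phi _ phi_ge0].
- exact: invariant_mean_cst.
- exact: invariant_meanZ (eval1_bounded phi).
- exact: invariant_meanD (eval1_bounded phi) (eval1_bounded psi).
- exact: invariant_mean_ge0 (eval1_bounded phi) phi_ge0.
Qed.

Lemma mean_type_f_invariant : definable_fun f -> f_invariant f mean_type.
Proof.
move=> f_def phi phi_fv.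
have [psi [psi_fv psi_cvg]] := definable_pred1_comp f_def phi_fv.
exists psi; split => //; split => // e e_gt0.
have [N psiN] := psi_cvg e e_gt0; exists N => k kN.
have phifB : fun_bounded (fun x => eval1 (f x) phi).
  by have [B phiB] := eval1_bounded phi; exists B => x; exact: phiB.
rewrite /mean_type -(invariant_mean_comp _ _ G_cofinite (eval1_bounded phi)).
exact: invariant_mean_dist_le (eval1_bounded _) phifB (psiN k kN).
Qed.
End MeanType.

Lemma realized_type_pred_value (R : realType) (L : language) (M : structure R L)
    (p : aformula R L -> R) (P : M -> R) (v : R) (c : M) :
  realizes_over [::] c p -> type_pred_value p P v -> P c = v.
Proof.
move=> c_p [psi [psi_fv [psi_P psi_v]]]; apply/eqP; rewrite -subr_eq0 -normr_eq0.
rewrite eq_le normr_ge0 andbT; apply/ler_addgt0Pr => e e_gt0; rewrite add0r.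
have [N1 psiN1] := psi_P (e / 2) ltac:(by rewrite divr_gt0).
have [N2 psiN2] := psi_v (e / 2) ltac:(by rewrite divr_gt0).
have := psiN1 _ (leq_maxl N1 N2) c; have := psiN2 _ (leq_maxr N1 N2).
rewrite c_p ?psi_fv // -/(eval1 c _) => /ler_normlP[h1 h2] /ler_normlP[h3 h4].
by apply/ler_normlP; split; lra.
Qed.

Theorem mainTheorem14 (R : realType) (L : language) (M : structure R L)
    (f : M -> M) :
  definable_fun f ->
  (exists p : aformula R L -> R, is_type M p /\ f_invariant f p) /\
  (aleph0_saturated M -> exists c : M, same_type c (f c)).
Proof.
move=> f_def.
have [G [GU G_cofinite]] :=
  ultraFilterLemma (eventually_filter : ProperFilter (\oo : set_system nat)).
have p_type := @mean_type_is_type _ _ _ f G GU.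
have p_inv := @mean_type_f_invariant _ _ _ f G GU G_cofinite f_def.
split; first by exists (mean_type f G).
move=> M_sat; have [c c_p] := M_sat [::] _ p_type.
exists c => phi phi_fv.
have /= -> := realized_type_pred_value c_p (p_inv _ phi_fv).
exact/esym/c_p.
Qed.
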